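(* Let $F$ be a forest and let $\ell(F)$ be the length (number of edges) of a longest path in $F$. Then $\chi_{\mathrm{g}}(F)=2$ if and only if either $1\le \ell(F)\le 2$, or $\ell(F)=3$, $|V(F)|$ is odd, and every component of $F$ with diameter $3$ is a path.
   Context: The $t$-coloring game on a finite graph $G$ with a set $C$ of $t$ colors: Alice and Bob alternate turns, Alice first, each coloring an uncolored vertex with a color from $C$ that is legal (not used on any neighbor of the vertex). Bob wins if at some point an uncolored vertex has no legal color available; otherwise Alice wins when all vertices are colored. The game chromatic number $\chi_{\mathrm{g}}(G)$ is the least $t$ such that Alice has a winning strategy in the $t$-coloring game on the initially uncolored graph $G$. *)

From mathcomp Require Import all_boot.
Set Implicit Arguments. Unset Strict Implicit. Unset Printing Implicit Defensive.

(* A finite simple graph: vertex type T : finType, adjacency e : rel T,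
   assumed symmetric and irreflexive (hypotheses of the theorem). *)

(* partial colorings with colors 'I_t ; None = uncolored *)
Definition pcol (T : finType) (t : nat) := {ffun T -> option 'I_t}.

Definition legal (T : finType) (e : rel T) t (c : pcol T t) (v : T) (k : 'I_t) : bool :=
  (c v == None) && [forall u, e v u ==> (c u != Some k)].

(* some uncolored vertex has no legal color: Bob has won *)
Definition stuck (T : finType) (e : rel T) t (c : pcol T t) : bool :=
  [exists v, (c v == None) && [forall k : 'I_t, ~~ legal e c v k]].

Definition all_colored (T : finType) t (c : pcol T t) : bool :=
  [forall v, c v != None].

Definition recolor (T : finType) t (c : pcol T t) (v : T) (k : 'I_t) : pcol T t :=
  [ffun u => if u == v then Some k else c u].

(* alice_wins_from e t n a c : Alice has a winning strategy from position c,
   with at most n moves remaining, a = true iff it is Alice's turn. *)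
Fixpoint alice_wins_from (T : finType) (e : rel T) t (n : nat) (a : bool)
    (c : pcol T t) : bool :=
  ~~ stuck e c &&
  (all_colored c ||
   match n with
   | 0 => false
   | n'.+1 =>
     if a then [exists v, exists k : 'I_t,
                 legal e c v k && alice_wins_from e n' false (recolor c v k)]
     else [forall v, forall k : 'I_t,
                 legal e c v k ==> alice_wins_from e n' true (recolor c v k)]
   end).

Definition empty_col (T : finType) t : pcol T t := [ffun => None].

(* Alice (moving first) wins the t-coloring game on the uncolored graph.
   Every move colors one vertex, so #|T| moves suffice. *)
Definition alice_wins (T : finType) (e : rel T) (t : nat) : bool :=
  alice_wins_from e #|T| true (empty_col T t).

Definition game_chromatic_number_is (T : finType) (e : rel T) (t : nat) : Prop :=
  alice_wins e t /\ forall s, s < t -> ~~ alice_wins e s.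

Definition is_forest (T : finType) (e : rel T) : Prop :=
  forall c : seq T, 3 <= size c -> ~ ucycle e c.

Definition has_path_of_length (T : finType) (e : rel T) (k : nat) : Prop :=
  exists (x : T) (p : seq T), [/\ size p = k, path e x p & uniq (x :: p)].

Definition longest_path_length_is (T : finType) (e : rel T) (k : nat) : Prop :=
  has_path_of_length e k /\ forall m, has_path_of_length e m -> m <= k.

Definition dist_le (T : finType) (e : rel T) (u w : T) (d : nat) : Prop :=
  exists p : seq T, [/\ size p <= d, path e u p & last u p = w].

Definition component (T : finType) (e : rel T) (v : T) : {set T} :=
  [set u | connect e v u].

Definition is_component (T : finType) (e : rel T) (C : {set T}) : Prop :=
  exists v, C = component e v.

Definition diameter_is (T : finType) (e : rel T) (C : {set T}) (d : nat) : Prop :=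
  (forall u w, u \in C -> w \in C -> dist_le e u w d) /\
  (exists u w, [/\ u \in C, w \in C & ~ dist_le e u w d.-1]) /\ 0 < d.

Definition induces_path (T : finType) (e : rel T) (C : {set T}) : Prop :=
  exists s : seq T, [/\ uniq s, C =i s &
    forall x y, x \in C -> y \in C ->
      e x y = ((index x s).+1 == index y s) || ((index y s).+1 == index x s)].

From mathcomp Require Import all_boot zify.
From Stdlib Require Import Classical_Prop.

Set Implicit Arguments. Unset Strict Implicit. Unset Printing Implicit Defensive.

(* With two colors Bob wins as soon as, on his turn, a colored vertex has an
   uncolored neighbor y with a further uncolored neighbor z that may receive
   the other color: coloring z leaves y without a legal color.  This threat
   forces Alice to open at the center of a star, after which Bob wins on a path
   with four edges and on a path with three edges carrying an extra leaf at an
   inner vertex; if some component is a path with three edges and |V| is even,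
   Bob never enters it and parity makes Alice do so first.
   Conversely, without these configurations Alice keeps every uncolored vertex
   seeing only one state on its neighborhood (all uncolored, or all one
   color): she repairs each move of Bob locally, or colors a vertex whose
   uncolored neighbors are leaves.  Such a vertex exists when there is no path
   with three edges, and otherwise whenever the number of uncolored vertices is
   odd, because leaves and their neighbors can then be paired off. *)

Definition flip (i : 'I_2) : 'I_2 := if val i == 0 then ord_max else ord0.

Lemma flip_neq i : flip i != i.
Proof. by case: i => [[|[|m]] Hi] //; rewrite /flip. Qed.

Lemma Some_neq_flip (i : 'I_2) : Some i <> Some (flip i).
Proof. by move=> [] /eqP; rewrite eq_sym (negbTE (flip_neq i)). Qed.

Lemma ord2_cases (i j k : 'I_2) : i != j -> k = i \/ k = j.
Proof.
case: i => [[|[|m]] Hi] //; case: j => [[|[|m']] Hj] //; case: k => [[|[|m'']] Hk] //;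
  move=> _; (left + right); exact: val_inj.
Qed.

Ltac sym_done :=
  first [ done
        | by rewrite eq_sym
        | match goal with H : symmetric ?r |- is_true (?r _ _) => by rewrite H end ].

Section Game.

Variables (T : finType) (e : rel T).
Hypotheses (e_sym : symmetric e) (e_irr : irreflexive e).

Lemma edge_neq x y : e x y -> x != y.
Proof. by apply: contraTneq => ->; rewrite e_irr. Qed.

Lemma recolorE t (c : pcol T t) v k u :
  recolor c v k u = if u == v then Some k else c u.
Proof. by rewrite ffunE. Qed.

Lemma legalP t (c : pcol T t) v k :
  reflect (c v = None /\ forall u, e v u -> c u <> Some k) (legal e c v k).
Proof.
apply: (iffP andP) => [[/eqP -> /forallP H]|[-> H]]; split => //.
- by move=> u evu; move: (H u); rewrite evu => /eqP.
- by apply/forallP => u; apply/implyP => /H /eqP.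
Qed.

Lemma all_coloredPn t (c : pcol T t) : reflect (exists v, c v = None) (~~ all_colored c).
Proof.
apply: (iffP forallPn) => [[v]|[v cv]]; last by exists v; rewrite cv.
by rewrite negbK => /eqP; exists v.
Qed.

Definition uncolored t (c : pcol T t) := [set x | c x == None].

Lemma all_colored_uncolored t (c : pcol T t) : all_colored c = (#|uncolored c| == 0).
Proof.
rewrite cards_eq0; apply/forallP/eqP => [H|/setP H v].
  by apply/setP => v; rewrite !inE; case: (c v) (H v).
by move: (H v); rewrite !inE; case: (c v).
Qed.

Lemma card_uncolored_recolor t (c : pcol T t) v k : c v = None ->
  #|uncolored c| = #|uncolored (recolor c v k)|.+1.
Proof.
move=> cv; rewrite (cardsD1 v) inE cv eqxx add1n; congr _.+1.
by apply: eq_card => u; rewrite !inE recolorE; case: (u =P v).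
Qed.

Lemma card_uncolored_empty t : #|uncolored (empty_col T t)| = #|T|.
Proof. by apply: eq_card => v; rewrite !inE ffunE. Qed.

Lemma legal_of_not_stuck t (c : pcol T t) v :
  ~~ stuck e c -> c v = None -> exists k, legal e c v k.
Proof.
move/existsPn/(_ v) => + cv; rewrite cv eqxx negb_forall => /existsP [k].
by rewrite negbK; exists k.
Qed.

Lemma exists_uncolored_outside t (c : pcol T t) (S : {set T}) :
  (forall s, s \in S -> c s = None) -> ~~ odd #|S| -> odd #|uncolored c| ->
  exists2 x, c x = None & x \notin S.
Proof.
move=> cS evenS oddc.
have sub : S \subset uncolored c by apply/subsetP => s /cS; rewrite inE => ->.
have : #|S| < #|uncolored c|.
  by rewrite ltn_neqAle subset_leq_card // andbT; apply: contraNneq evenS => ->.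
rewrite -subn_gt0 -cardsDS // card_gt0 => /set0Pn [x]; rewrite !inE => /andP [xS /eqP cx].
by exists x.
Qed.

Lemma stuck_alice_loses t n a (c : pcol T t) : stuck e c -> alice_wins_from e n a c = false.
Proof. by case: n => [|n]; case: a => /= ->. Qed.

Lemma alice_wins_all_colored t n a (c : pcol T t) :
  ~~ stuck e c -> all_colored c -> alice_wins_from e n a c.
Proof. by case: n => [|n]; case: a => /= -> ->. Qed.

Lemma alice_wins_by_move t n (c : pcol T t) v k : ~~ stuck e c -> legal e c v k ->
  alice_wins_from e n false (recolor c v k) -> alice_wins_from e n.+1 true c.
Proof.
move=> ns L W; rewrite /= ns; apply/orP; right.
by apply/existsP; exists v; apply/existsP; exists k; rewrite L.
Qed.

Lemma alice_wins_all_replies t n (c : pcol T t) : ~~ stuck e c ->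
  (forall v k, legal e c v k -> alice_wins_from e n true (recolor c v k)) ->
  alice_wins_from e n.+1 false c.
Proof.
move=> ns W; rewrite /= ns; apply/orP; right.
by apply/forallP => v; apply/forallP => k; apply/implyP; apply: W.
Qed.

Lemma bob_wins_by_move t n (c : pcol T t) v k : legal e c v k ->
  ~~ alice_wins_from e n.-1 true (recolor c v k) -> alice_wins_from e n false c = false.
Proof.
move=> L W; have nac : ~~ all_colored c by apply/all_coloredPn; exists v; case/legalP: L.
case: n W => [|n] W /=; first by rewrite (negbTE nac) andbF.
apply/negbTE; rewrite negb_and negb_or nac /= negb_forall; apply/orP; right.
by apply/existsP; exists v; rewrite negb_forall; apply/existsP; exists k; rewrite L.
Qed.

Lemma alice_loses_all_moves t n (c : pcol T t) : ~~ all_colored c ->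
  (forall v k, legal e c v k -> ~~ alice_wins_from e n.-1 false (recolor c v k)) ->
  alice_wins_from e n true c = false.
Proof.
move=> nac H; case: n H => [|n] H /=; first by rewrite (negbTE nac) andbF.
rewrite (negbTE nac) /=; apply/negbTE; rewrite negb_and; apply/orP; right.
apply/existsPn => v; apply/existsPn => k; rewrite negb_and.
by case L: (legal e c v k) => //=; apply: H.
Qed.

Lemma alice_loses_one_color t u v : t <= 1 -> e u v -> ~~ alice_wins e t.
Proof.
move=> t1 euv; have uv := edge_neq euv.
have ord_eq (i j : 'I_t) : i = j by apply: val_inj; case: i j => [i ?] [j ?] /=; lia.
pose open_edge (c : pcol T t) := (c u == None) || (c v == None).
have nac c : open_edge c -> ~~ all_colored c.
  by case/orP => /eqP cw; apply/all_coloredPn; eexists; exact: cw.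
have keep c x k : open_edge c -> legal e c x k -> open_edge (recolor c x k).
  move=> + /legalP [cx nbx]; rewrite /open_edge !recolorE.
  case: (u =P x) => [ux|_]; case: (v =P x) => [vx|_] //; subst x.
  - by rewrite vx eqxx in uv.
  - by case cv: (c v) => [k0|] // _; case: (nbx v euv); rewrite cv (ord_eq k0 k).
  - by case cu: (c u) => [k0|] // _; case: (nbx u); rewrite 1?e_sym // cu (ord_eq k0 k).
suff W n a c : open_edge c -> alice_wins_from e n a c = false.
  by rewrite /alice_wins W // /open_edge ffunE.
elim: n a c => [|n IH] a c oc; first by rewrite /= (negbTE (nac c oc)) andbF.
case: a.
- by apply: (alice_loses_all_moves (nac c oc)) => x k L; rewrite IH // keep.
- have [S|NS] := boolP (stuck e c); first exact: stuck_alice_loses.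
  have [w cw] := all_coloredPn _ (nac c oc).
  have [k L] := legal_of_not_stuck NS cw.
  by apply: (bob_wins_by_move L); rewrite IH // keep.
Qed.

Lemma alice_wins_edgeless : (forall u v, ~~ e u v) -> alice_wins e 1.
Proof.
move=> noe.
have L (c : pcol T 1) w : c w = None -> legal e c w ord0.
  by move=> cw; apply/legalP; split => // z ewz; move: (noe w z); rewrite ewz.
have NS (c : pcol T 1) : ~~ stuck e c.
  apply/existsPn => w; rewrite negb_and negb_forall.
  by case cw: (c w) => //=; apply/existsP; exists ord0; rewrite negbK L.
suff W n a (c : pcol T 1) : #|uncolored c| <= n -> alice_wins_from e n a c.
  by apply: W; rewrite card_uncolored_empty.
elim: n a c => [|n IH] a c uc.
  by apply: alice_wins_all_colored; rewrite // all_colored_uncolored -leqn0.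
have [/all_coloredPn [w cw]|] := boolP (~~ all_colored c); last first.
  by rewrite negbK; apply: alice_wins_all_colored.
case: a.
- apply: (alice_wins_by_move (NS c) (L c w cw)); apply: IH.
  by move: uc; rewrite (card_uncolored_recolor ord0 cw).
- apply: alice_wins_all_replies => // x k /legalP [cx _]; apply: IH.
  by move: uc; rewrite (card_uncolored_recolor k cx).
Qed.

(* On Bob's turn, coloring [z] with [flip i] leaves [y] between both colors. *)
Definition threat (c : pcol T 2) x y z i :=
  [/\ c x = Some i, e x y, c y = None, e y z & legal e c z (flip i)].

Lemma bob_wins_threat n (c : pcol T 2) x y z i :
  threat c x y z i -> alice_wins_from e n false c = false.
Proof.
case=> cx exy cy eyz Lz; apply: (bob_wins_by_move Lz); rewrite stuck_alice_loses //.
have xz : x != z by apply: contraTneq Lz => <-; rewrite /legal cx.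
apply/existsP; exists y; rewrite recolorE (negbTE (edge_neq eyz)) cy eqxx /=.
apply/forallP => k; apply/negP => /legalP [_ nby].
case: (ord2_cases k (flip_neq i)) => ?; subst k.
- by apply: (nby z eyz); rewrite recolorE eqxx.
- by apply: (nby x); rewrite 1?e_sym // recolorE (negbTE xz).
Qed.

End Game.

Fixpoint no_backtrack (T : eqType) (s : seq T) : bool :=
  match s with
  | x :: ((_ :: z :: _) as s') => (x != z) && no_backtrack s'
  | _ => true
  end.

Lemma no_backtrack_behead (T : eqType) (x : T) s :
  no_backtrack (x :: s) -> no_backtrack s.
Proof. by case: s => [|y [|z s]] //= /andP []. Qed.

Section Forest.

Variables (T : finType) (e : rel T).
Hypotheses (e_sym : symmetric e) (e_irr : irreflexive e) (forest : is_forest e).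

Lemma no_backtrack_uniq x p : path e x p -> no_backtrack (x :: p) -> uniq (x :: p).
Proof.
elim: p x => [|y p IH] x; first by [].
move=> pxp nb; have /andP [exy pyp] : e x y && path e y p := pxp.
have uyp : uniq (y :: p) by apply: IH => //; exact: no_backtrack_behead nb.
rewrite cons_uniq uyp andbT; apply/negP => xyp.
have {xyp} xp : x \in p.
  by move: xyp; rewrite inE => /orP [/eqP xy|//]; rewrite xy e_irr in exy.
case/splitPr: xp pyp uyp nb => p1 p2.
rewrite cat_path -cat_cons cat_uniq => /andP [pyp1 /andP [ex _]] /and3P [uyp1 + _] nb.
rewrite /= negb_or => /andP [xyp1 _].
apply: (forest (c := x :: y :: p1)).
- by case: p1 {pyp1 ex uyp1 xyp1} nb => //=; rewrite eqxx.
- by rewrite /ucycle cons_uniq xyp1 uyp1 andbT /cycle rcons_path /= exy pyp1 ex.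
Qed.

Lemma no_closed_walk x p : path e x p -> last x p = x -> p != [::] ->
  no_backtrack (x :: p) -> False.
Proof.
move=> pp lp np /(no_backtrack_uniq pp).
by case/lastP: p np {pp} lp => // q y _; rewrite last_rcons => ->; rewrite /= mem_rcons mem_head.
Qed.

Lemma no_triangle a b c : e a b -> e b c -> e c a -> False.
Proof.
move=> eab ebc eca; apply: (@no_closed_walk a [:: b; c; a]) => //.
- by rewrite /= eab ebc eca.
- by rewrite /= eq_sym (edge_neq e_irr eca) eq_sym (edge_neq e_irr eab).
Qed.

Lemma no_square a b c d : e a b -> e b c -> e c d -> e d a -> a != c -> b != d -> False.
Proof.
move=> eab ebc ecd eda ac bd; apply: (@no_closed_walk a [:: b; c; d; a]) => //.
- by rewrite /= eab ebc ecd eda.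
- by rewrite /= ac bd eq_sym ac.
Qed.

Lemma no_pentagon a b c d f : e a b -> e b c -> e c d -> e d f -> e f a ->
  a != c -> b != d -> c != f -> d != a -> False.
Proof.
move=> eab ebc ecd edf efa ac bd cf da; apply: (@no_closed_walk a [:: b; c; d; f; a]) => //.
- by rewrite /= eab ebc ecd edf efa.
- by rewrite /= ac bd cf da.
Qed.

Lemma P5_start_far_from_end a1 a2 a3 a4 a5 w : e a1 a2 -> e a2 a3 -> e a3 a4 -> e a4 a5 ->
  a1 != a3 -> a2 != a4 -> a3 != a5 -> [|| w == a1, w == a2 | e w a1] ->
  [/\ a4 != w, a5 != w & ~~ e a5 w].
Proof.
move=> e12 e23 e34 e45 n13 n24 n35 near_a1.
have U : uniq [:: a1; a2; a3; a4; a5].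
  apply: (@no_backtrack_uniq a1 [:: a2; a3; a4; a5]).
    by rewrite /= e12 e23 e34 e45.
  by rewrite /= n13 n24 n35.
have [n14 n15 n25] : [/\ a1 != a4, a1 != a5 & a2 != a5].
  by split; apply: contraTneq U => ->; rewrite /= !inE !eqxx ?orbT /= ?andbF.
have [->|wa2] := eqVneq w a2.
  split; rewrite 1?eq_sym //; apply/negP => e52.
  exact: (no_square e23 e34 e45 e52).
have [->|wa1] := eqVneq w a1.
  split; rewrite 1?eq_sym //; apply/negP => e51.
  by apply: (no_pentagon e12 e23 e34 e45 e51); rewrite // eq_sym.
have ewa1 : e w a1 by move: near_a1; rewrite (negbTE wa1) (negbTE wa2).
have wa4 : w != a4.
  apply: contraTneq ewa1 => ->; apply/negP => e41.
  exact: (no_square e12 e23 e34 e41).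
split; rewrite 1?eq_sym //.
  apply: contraTneq ewa1 => ->; apply/negP => e51.
  by apply: (no_pentagon e12 e23 e34 e45 e51); rewrite // eq_sym.
apply/negP => e5w; apply: (@no_closed_walk w [:: a1; a2; a3; a4; a5; w]) => //.
  by rewrite /= ewa1 e12 e23 e34 e45 e5w.
by rewrite /= wa2 n13 n24 n35 eq_sym wa4.
Qed.

Lemma has_path_of_walk x p : path e x p -> no_backtrack (x :: p) ->
  has_path_of_length e (size p).
Proof. by move=> pp nb; exists x, p; split => //; apply: no_backtrack_uniq. Qed.

(* Phrased with non-backtracking walks, which in a forest are paths. *)
Definition P4_free := forall a b c d, e a b -> e b c -> e c d -> a != c -> b != d -> False.

Definition P5_free := forall a b c d f,
  e a b -> e b c -> e c d -> e d f -> a != c -> b != d -> c != f -> False.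

(* Without paths with four edges, this excludes exactly the components of
   diameter 3 that are not paths. *)
Definition double_star_free := forall y w x1 x2 w',
  e y w -> e y x1 -> e y x2 -> e w w' -> x1 != x2 -> x1 != w -> x2 != w -> w' != y -> False.

Lemma double_star_free_of_P4_free : P4_free -> double_star_free.
Proof.
move=> noP4 y w x1 x2 w' eyw eyx1 _ eww' _ x1w _ w'y.
by apply: (noP4 x1 y w w'); sym_done.
Qed.

Lemma P4_free_of_no_path3 : ~ has_path_of_length e 3 -> P4_free.
Proof.
move=> noP a b c d eab ebc ecd ac bd; apply: noP.
by apply: (@has_path_of_walk a [:: b; c; d]); rewrite /= ?eab ?ebc ?ecd ?ac ?bd.
Qed.

Lemma P5_free_of_no_path4 : ~ has_path_of_length e 4 -> P5_free.
Proof.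
move=> noP a b c d f eab ebc ecd edf ac bd cf; apply: noP.
by apply: (@has_path_of_walk a [:: b; c; d; f]); rewrite /= ?eab ?ebc ?ecd ?edf ?ac ?bd ?cf.
Qed.

End Forest.

Section Paths.

Variables (T : finType) (e : rel T).

Lemma has_path_le j k : has_path_of_length e k -> j <= k -> has_path_of_length e j.
Proof.
move=> [x [p [sz pth u]]] jk; exists x, (take j p); split.
- by rewrite size_takel // sz.
- exact: take_path.
- by have := take_uniq j.+1 u.
Qed.

Lemma has_path1P : irreflexive e -> has_path_of_length e 1 <-> exists u v, e u v.
Proof.
move=> e_irr; split => [[x [[|y [|? ?]] [//= _ /andP [exy _] _]]]|[u [v euv]]].
  by exists x, y.
by exists u, [:: v]; rewrite /= euv inE (edge_neq e_irr euv).
Qed.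

Lemma no_path4_of_P5_free : P5_free e -> ~ has_path_of_length e 4.
Proof.
move=> noP [x [[|a [|b [|c [|d [|? ?]]]]] [//= _ /and5P [xa ab bc cd _] U]]].
by apply: (noP x a b c d) => //; apply: contraTneq U => ->; rewrite /= !inE !eqxx ?orbT /= ?andbF.
Qed.

Lemma walk_of_path3 : has_path_of_length e 3 ->
  exists a b c d, [/\ e a b, e b c, e c d, a != c & b != d].
Proof.
move=> [x [[|a [|b [|c [|? ?]]]] [//= _ /and4P [xa ab bc _] U]]].
by exists x, a, b, c; split => //; apply: contraTneq U => ->; rewrite /= !inE !eqxx ?orbT /= ?andbF.
Qed.

Lemma longest_path_length_of k : has_path_of_length e k -> ~ has_path_of_length e k.+1 ->
  longest_path_length_is e k.
Proof.
move=> Hk Hk1; split => // m Hm; rewrite leqNgt; apply/negP => km.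
exact/Hk1/(has_path_le Hm).
Qed.

End Paths.

Section AliceStrategy.

Variables (T : finType) (e : rel T).
Hypotheses (e_sym : symmetric e) (e_irr : irreflexive e).
Implicit Types (c : pcol T 2).

Definition uniform (c : pcol T 2) :=
  forall u z z', c u = None -> e u z -> e u z' -> c z = c z'.

Lemma uniform_empty : uniform (empty_col T 2).
Proof. by move=> u z z' _ _ _; rewrite !ffunE. Qed.

Lemma uniform_legal c u : uniform c -> c u = None -> exists k, legal e c u k.
Proof.
move=> Uc cu; case: (pickP (e u)) => [z euz|nonbr].
- exists (if c z is Some i then flip i else ord0); apply/legalP; split => // z' euz'.
  by rewrite (Uc u z' z) //; case: (c z) => // i; apply: Some_neq_flip.
- by exists ord0; apply/legalP; split => // z; rewrite nonbr.
Qed.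

Lemma uniform_not_stuck c : uniform c -> ~~ stuck e c.
Proof.
move=> Uc; apply/existsPn => u; rewrite negb_and negb_forall.
case cu: (c u) => //=; have [k L] := uniform_legal Uc cu.
by apply/existsP; exists k; rewrite negbK.
Qed.

Lemma uniform_update (c c' : pcol T 2) (D : seq T) : uniform c ->
  (forall z, z \notin D -> c' z = c z) -> (forall z, z \in D -> c' z != None) ->
  (forall u z, c' u = None -> z \in D -> e u z ->
     exists i, forall z', e u z' -> c' z' = Some i) ->
  uniform c'.
Proof.
move=> Uc out inD nearD u z z' cu euz euz'.
have uD : u \notin D by apply/negP => /inD; rewrite cu.
have [/hasP [w wD euw]|farD] := boolP (has (e u) D).
  by have [i Hi] := nearD u w cu wD euw; rewrite !Hi.
have outD t : e u t -> t \notin D by move=> eut; apply: contra farD => tD; apply/hasP; exists t.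
by rewrite !out ?outD //; apply: (Uc u); rewrite // -(out u uD).
Qed.

Lemma not_stuck_after_move c x k : uniform c -> legal e c x k -> ~~ stuck e (recolor c x k).
Proof.
move=> Uc /legalP [cx _]; apply/existsPn => u; rewrite negb_and negb_forall recolorE.
case: (u =P x) => // ux; case cu: (c u) => //=; apply/existsP.
have [eux|neux] := boolP (e u x).
  exists (flip k); rewrite negbK; apply/legalP; split; first by rewrite recolorE; case: (u =P x).
  move=> t eut; rewrite recolorE; case: (t =P x) => [_|tx]; first exact: Some_neq_flip.
  by rewrite (Uc u t x) // cx.
have [k' /legalP [_ Hk']] := uniform_legal Uc cu; exists k'; rewrite negbK.
apply/legalP; split; first by rewrite recolorE; case: (u =P x).
move=> t eut; rewrite recolorE; case: (t =P x) => [tx|_]; last exact: Hk'.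
by rewrite -tx eut in neux.
Qed.

Definition safe (c : pcol T 2) x :=
  [forall y, e x y ==> (c y == None) ==> [forall z, e y z ==> (z == x)]].

Lemma safeP c x : reflect (forall y z, e x y -> c y = None -> e y z -> z = x) (safe c x).
Proof.
apply: (iffP forallP) => [H y z exy cy eyz|H y].
  by move: (H y); rewrite exy cy eqxx => /forallP /(_ z); rewrite eyz => /eqP.
apply/implyP => exy; apply/implyP => /eqP cy; apply/forallP => z; apply/implyP => eyz.
by rewrite (H y z).
Qed.

Lemma unsafeP c x : ~~ safe c x -> exists y z, [/\ e x y, c y = None, e y z & z != x].
Proof.
move/forallPn => [y]; rewrite !negb_imply => /and3P [exy /eqP cy /forallPn [z]].
by rewrite negb_imply => /andP [eyz zx]; exists y, z.
Qed.

Lemma uniform_recolor_safe c x k : uniform c -> safe c x -> legal e c x k ->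
  uniform (recolor c x k).
Proof.
move=> Uc /safeP Sx /legalP [cx _]; apply: (uniform_update (D := [:: x]) Uc).
- by move=> z; rewrite inE recolorE => /negbTE ->.
- by move=> z; rewrite inE recolorE => ->.
- move=> u z; rewrite recolorE inE; case: (u =P x) => // ux cu /eqP -> eux.
  by exists k => z' euz'; rewrite recolorE (Sx u z') ?eqxx // e_sym.
Qed.

Lemma exists_safe_of_P4_free c : P4_free e -> uniform c -> ~~ all_colored c ->
  exists2 x, c x = None & safe c x.
Proof.
move=> noP4 Uc /all_coloredPn [x cx].
have [|/unsafeP [y [z [exy cy eyz zx]]]] := boolP (safe c x); first by exists x.
have [|/unsafeP [y' [z' [eyy' cy' ey'z' z'y]]]] := boolP (safe c y); first by exists y.
case: (y' =P x) => [E|/eqP y'x]; last by case: (noP4 x y y' z'); sym_done.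
by subst y'; case: (noP4 z' x y z); sym_done.
Qed.

(* [leaf x] also holds for an isolated vertex [x]. *)
Definition leaf x := [forall a, forall b, e x a ==> e x b ==> (a == b)].

Lemma leafP x : reflect (forall a b, e x a -> e x b -> a = b) (leaf x).
Proof.
apply: (iffP forallP) => [H a b ea eb|H a].
  by move: (H a) => /forallP /(_ b); rewrite ea eb => /eqP.
by apply/forallP => b; apply/implyP => ea; apply/implyP => eb; rewrite (H a b).
Qed.

Lemma leafPn x : ~~ leaf x -> exists a b, [/\ e x a, e x b & a != b].
Proof.
move/forallPn => [a /forallPn [b]]; rewrite !negb_imply => /and3P [ea eb ab].
by exists a, b.
Qed.

Definition nbr x := odflt x [pick a | e x a].

Lemma nbrE x a : leaf x -> e x a -> nbr x = a.
Proof.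
move=> /leafP lx ea; rewrite /nbr; case: pickP => [a' ea'|H] /=; first exact: lx.
by move: (H a); rewrite ea.
Qed.

Hypotheses (forest : is_forest e) (noP5 : P5_free e) (noS : double_star_free e).

(* Without safe moves, [nbr] pairs the uncolored leaves with the uncolored
   non-leaves. *)
Section NoSafeMove.

Variable c : pcol T 2.
Hypotheses (Uc : uniform c)
  (no_safe : forall x, c x = None -> exists y z, [/\ e x y, c y = None, e y z & z != x]).

Let U := uncolored c.
Let L := [set x | leaf x].

Lemma nbr_injective : {in U :&: L &, injective nbr}.
Proof.
move=> x1 x2; rewrite !inE => /andP [/eqP cx1 l1] /andP [/eqP cx2 l2] E.
apply/eqP/negPn/negP => x12.
have [y [_ [ex1y cy _ _]]] := no_safe cx1.
have [y2 [_ [ex2y2 _ _ _]]] := no_safe cx2.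
rewrite (nbrE l1 ex1y) (nbrE l2 ex2y2) in E; subst y2.
have [w [w' [eyw _ eww' w'y]]] := no_safe cy.
have leaf_neq x : leaf x -> e x y -> x != w.
  move=> /leafP lx exy; apply: contraNneq w'y => xw.
  by rewrite (lx w' y) // ?xw // e_sym -xw.
by apply: (noS eyw _ _ eww' x12); rewrite 1?e_sym // leaf_neq.
Qed.

Lemma nbr_image : nbr @: (U :&: L) = U :\: L.
Proof.
apply/setP => y; apply/imsetP/idP => [[x]|].
  rewrite !inE => /andP [/eqP cx lx] ->.
  have [y' [z [exy' cy' ey'z zx]]] := no_safe cx.
  rewrite (nbrE lx exy') cy' eqxx andbT; apply/leafP => ly'.
  by move/eqP: zx; apply; apply: ly' ey'z _; rewrite e_sym.
rewrite !inE => /andP [/leafPn [a [b [eya eyb ab]]] /eqP cy].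
have [w [w' [eyw cw eww' w'y]]] := no_safe cy.
have [x [eyx xw]] : exists x, e y x /\ x != w.
  case: (a =P w) => [aw|/eqP]; last by exists a.
  by exists b; rewrite -aw eq_sym.
have lx : leaf x.
  apply/leafP => s s' exs exs'.
  have to_y t : e x t -> t = y.
    move=> ext; apply/eqP/negPn/negP => ty.
    by apply: (@noP5 t x y w w'); sym_done.
  by rewrite (to_y s) // (to_y s').
exists x; last by rewrite (nbrE (a := y) lx) // e_sym.
by rewrite !inE lx andbT (Uc cy eyx eyw) cw.
Qed.

Lemma no_safe_move_even : ~~ odd #|U|.
Proof. by rewrite -(cardsID L U) -nbr_image card_in_imset ?addnn ?odd_double //; exact: nbr_injective. Qed.

End NoSafeMove.

Lemma exists_safe c : uniform c -> ~~ all_colored c -> P4_free e \/ odd #|uncolored c| ->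
  exists2 x, c x = None & safe c x.
Proof.
move=> Uc nac [noP4|odd_c]; first exact: exists_safe_of_P4_free.
apply: NNPP => no_safe; move: odd_c; apply/negP.
apply: (no_safe_move_even Uc) => x cx.
by apply: unsafeP; apply/negP => Sx; apply: no_safe; exists x.
Qed.

Section UnsafeMove.

Variables (c : pcol T 2) (x' : T) (k' : 'I_2) (y : T).
Hypotheses (Uc : uniform c) (Lx : legal e c x' k') (ex'y : e x' y) (cy : c y = None).

Let cx' : c x' = None. Proof. by case/legalP: Lx. Qed.

Let y_nbrs_uncolored t : e y t -> c t = None.
Proof. by move=> eyt; rewrite (Uc cy eyt (_ : e y x')) ?cx' // e_sym. Qed.

Lemma alice_reply_far w w' : e y w -> w != x' -> e w w' -> w' != y ->
  legal e (recolor c x' k') w k' /\ uniform (recolor (recolor c x' k') w k').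
Proof.
move=> eyw wx' eww' w'y.
have x'_leaf v : e x' v -> v = y.
  move=> ex'v; apply/eqP/negPn/negP => vy.
  by apply: (@noP5 v x' y w w'); sym_done.
have y_nbrs v : e y v -> v = x' \/ v = w.
  move=> eyv; case: (v =P x') => [|/eqP vx']; first by left.
  case: (v =P w) => [|/eqP vw]; first by right.
  by case: (@noS y w x' v w'); sym_done.
have w_nbrs_leaves v s : e w v -> v != y -> e v s -> s = w.
  move=> ewv vy evs; apply/eqP/negPn/negP => sw.
  by apply: (@noP5 s v w y x'); sym_done.
have w_nbrs_uncolored t : e w t -> c t = None.
  by move=> ewt; rewrite (Uc (y_nbrs_uncolored eyw) ewt (_ : e w y)) ?cy // e_sym.
have nex'w : ~~ e x' w by apply/negP => ex'w; apply: (no_triangle e_irr forest ex'y eyw); rewrite e_sym.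
split.
  apply/legalP; split; first by rewrite recolorE (negbTE wx') y_nbrs_uncolored.
  move=> t ewt; rewrite recolorE; case: (t =P x') => [tx'|_]; last by rewrite w_nbrs_uncolored.
  by rewrite -tx' e_sym ewt in nex'w.
apply: (uniform_update (D := [:: x'; w]) Uc).
- by move=> s; rewrite !inE negb_or => /andP [sx' sw]; rewrite !recolorE (negbTE sx') (negbTE sw).
- by move=> s; rewrite !inE !recolorE; case: (s == w); case: (s == x').
move=> u s; rewrite recolorE; case: (u =P w) => // /eqP uw.
rewrite recolorE; case: (u =P x') => // /eqP ux' cu.
have [-> _ _|uy] := eqVneq u y.
  by exists k' => t /y_nbrs [] ->; rewrite !recolorE eqxx //; case: ifP.
rewrite !inE => /orP [] /eqP -> eus.
- by move: uy; rewrite -(x'_leaf u) ?eqxx // e_sym.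
- by exists k' => t eut; rewrite !recolorE (w_nbrs_leaves u t) ?eqxx // e_sym.
Qed.

Lemma alice_reply_near z : e y z -> z != x' ->
  (forall w w', e y w -> w != x' -> e w w' -> w' = y) ->
  legal e (recolor c x' k') y (flip k') /\ uniform (recolor (recolor c x' k') y (flip k')).
Proof.
move=> eyz zx' y_leaves; have x'y := edge_neq e_irr ex'y.
have x'_nbrs_leaves u t : e x' u -> u != y -> e u t -> t = x'.
  move=> ex'u uy eut; apply/eqP/negPn/negP => tx'.
  by apply: (@noP5 t u x' y z); sym_done.
split.
  apply/legalP; split; first by rewrite recolorE eq_sym (negbTE x'y).
  move=> t eyt; rewrite recolorE; case: (t =P x') => [_|_]; first exact: Some_neq_flip.
  by rewrite y_nbrs_uncolored.
apply: (uniform_update (D := [:: x'; y]) Uc).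
- by move=> s; rewrite !inE negb_or => /andP [sx' sy]; rewrite !recolorE (negbTE sx') (negbTE sy).
- by move=> s; rewrite !inE !recolorE; case: (s == y); case: (s == x').
move=> u s; rewrite recolorE; case: (u =P y) => // /eqP uy.
rewrite recolorE; case: (u =P x') => // /eqP ux' cu.
rewrite !inE => /orP [] /eqP -> eus.
- exists k' => t eut; rewrite !recolorE (x'_nbrs_leaves u t) ?eqxx // 1?e_sym //.
  by rewrite (negbTE x'y).
- by exists (flip k') => t eut; rewrite !recolorE (y_leaves u t) ?eqxx // e_sym.
Qed.

End UnsafeMove.

Lemma alice_reply c x' k' : uniform c -> legal e c x' k' -> ~~ all_colored (recolor c x' k') ->
  P4_free e \/ ~~ odd #|uncolored c| ->
  exists x k, legal e (recolor c x' k') x k /\ uniform (recolor (recolor c x' k') x k).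
Proof.
move=> Uc Lx nac par; have /legalP [cx' _] := Lx.
have [Sx|/unsafeP [y [z [ex'y cy eyz zx']]]] := boolP (safe c x').
  have U2 := uniform_recolor_safe Uc Sx Lx.
  have [|x cx Sx2] := exists_safe U2 nac.
    by case: par => [|ev]; [left | right; move: ev; rewrite (card_uncolored_recolor k' cx') negbK].
  have [k L] := uniform_legal U2 cx.
  by exists x, k; split; last exact: uniform_recolor_safe.
case: (classic (exists w w', [/\ e y w, w != x', e w w' & w' != y])).
  by move=> [w [w' [eyw wx' eww' w'y]]]; exists w, k'; apply: alice_reply_far eww' w'y.
move=> no_far; exists y, (flip k'); apply: (alice_reply_near Uc Lx ex'y cy eyz zx').
move=> w w' eyw wx' eww'; apply/eqP/negPn/negP => w'y.
by apply: no_far; exists w, w'.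
Qed.

Lemma alice_wins_bob_turn n c : uniform c -> #|uncolored c| <= n ->
  P4_free e \/ ~~ odd #|uncolored c| -> alice_wins_from e n false c.
Proof.
elim/ltn_ind: n c => n IH c Uc cn par.
have NS := uniform_not_stuck Uc.
have [allc|nac] := boolP (all_colored c); first exact: alice_wins_all_colored.
case: n IH cn => [|n] IH cn; first by rewrite all_colored_uncolored -leqn0 cn in nac.
apply: alice_wins_all_replies => // x' k' Lx; have /legalP [cx' _] := Lx.
have c2n := card_uncolored_recolor k' cx'.
have NS2 := not_stuck_after_move Uc Lx.
have [allc2|nac2] := boolP (all_colored (recolor c x' k')); first exact: alice_wins_all_colored.
have [x [k [L2 U3]]] := alice_reply Uc Lx nac2 par.
have /legalP [cx _] := L2; have c3n := card_uncolored_recolor k cx.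
case: n IH cn => [|n] IH cn.
  by move: cn; rewrite c2n c3n.
apply: (alice_wins_by_move NS2 L2); apply: IH => //.
- by move: cn; rewrite c2n c3n.
- by case: par => [|ev]; [left | right; move: ev; rewrite c2n c3n /= negbK].
Qed.

Lemma alice_wins_two_colors : P4_free e \/ odd #|T| -> alice_wins e 2.
Proof.
move=> par; have U0 := uniform_empty; have NS := uniform_not_stuck U0.
rewrite /alice_wins; case E: #|T| => [|n].
  by apply: alice_wins_all_colored; rewrite // all_colored_uncolored card_uncolored_empty E.
have nac : ~~ all_colored (empty_col T 2) by rewrite all_colored_uncolored card_uncolored_empty E.
have [|x cx Sx] := exists_safe U0 nac; first by rewrite card_uncolored_empty.
have [k L] := uniform_legal U0 cx; have c1n := card_uncolored_recolor k cx.
apply: (alice_wins_by_move NS L); apply: alice_wins_bob_turn.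
- exact: uniform_recolor_safe.
- by rewrite -ltnS -c1n card_uncolored_empty E.
- by case: par => [|odd_T]; [left | right; move: odd_T; rewrite -(card_uncolored_empty T 2) c1n].
Qed.

End AliceStrategy.

Section BobStrategies.

Variables (T : finType) (e : rel T).
Hypotheses (e_sym : symmetric e) (e_irr : irreflexive e) (forest : is_forest e).

Definition star_center v := forall y z, e v y -> e y z -> z = v.

Lemma star_center_neq v x y z : star_center v -> e x y -> e y z -> z != x -> x != v.
Proof.
move=> Sv exy eyz; apply: contraNneq => xv.
by rewrite xv in exy; rewrite (Sv y z exy eyz) xv.
Qed.

Lemma threat_recolor (c : pcol T 2) v k y z : e v y -> e y z -> z != v ->
  c y = None -> c z = None -> (forall s, e z s -> s != v -> c s = None) ->
  threat e (recolor c v k) v y z k.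
Proof.
move=> evy eyz zv cy cz nbz; split => //; first by rewrite recolorE eqxx.
  by rewrite recolorE eq_sym (negbTE (edge_neq e_irr evy)).
apply/legalP; split; first by rewrite recolorE (negbTE zv).
move=> s ezs; rewrite recolorE; case: (s =P v) => [_|/eqP sv]; first exact: Some_neq_flip.
by rewrite nbz.
Qed.

Lemma bob_wins_unless_star_center (x : T) :
  (forall v g n, star_center v ->
     alice_wins_from e n false (recolor (empty_col T 2) v g) = false) ->
  ~~ alice_wins e 2.
Proof.
move=> bob_wins; apply/negbT; apply: alice_loses_all_moves => [|v g _].
  by apply/all_coloredPn; exists x; rewrite ffunE.
apply/negbT; case: (boolP [exists y, exists z, [&& e v y, e y z & z != v]]).
  move=> /existsP [y /existsP [z /and3P [evy eyz zv]]].
  apply: (bob_wins_threat e_sym e_irr _ (threat_recolor g evy eyz zv _ _ _)); rewrite ?ffunE //.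
  by move=> s _ _; rewrite ffunE.
move=> /existsPn no_far; apply: bob_wins => y z evy eyz; apply/eqP/negPn/negP => zv.
by move: (no_far y) => /existsPn /(_ z); rewrite evy eyz zv.
Qed.

Lemma third_moveE v g b w j s :
  recolor (recolor (recolor (empty_col T 2) v g) b g) w j s =
  if s == w then Some j else if (s == b) || (s == v) then Some g else None.
Proof. by rewrite !recolorE ffunE; case: (s == b). Qed.

(* Bob answers Alice's opening [v] by giving [b] the same color; [a] is still
   uncolored afterwards, so the game goes on. *)
Lemma bob_wins_second_round (a b : T) : a != b ->
  (forall v, star_center v -> [/\ a != v, b != v & ~~ e v b]) ->
  (forall v g w j, star_center v -> w != v -> w != b ->
     legal e (recolor (recolor (empty_col T 2) v g) b g) w j ->
     exists x y z i, threat e (recolor (recolor (recolor (empty_col T 2) v g) b g) w j) x y z i) ->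
  ~~ alice_wins e 2.
Proof.
move=> ab b_free reply; apply: (bob_wins_unless_star_center b) => v g n Sv.
have [av bv nevb] := b_free v Sv.
have Lb : legal e (recolor (empty_col T 2) v g) b g.
  apply/legalP; split; first by rewrite recolorE ffunE (negbTE bv).
  move=> s ebs; rewrite recolorE ffunE; case: (s =P v) => // sv.
  by rewrite -sv e_sym ebs in nevb.
apply: (bob_wins_by_move Lb); apply/negbT; apply: alice_loses_all_moves => [|w j Lw].
  by apply/all_coloredPn; exists a; rewrite !recolorE ffunE (negbTE ab) (negbTE av).
have /legalP [c2w _] := Lw; move: c2w; rewrite !recolorE ffunE.
case: (w =P b) => // /eqP wb; case: (w =P v) => // /eqP wv _.
have [x [y [z [i T3]]]] := reply v g w j Sv wv wb Lw.
by apply/negbT; apply: bob_wins_threat T3.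
Qed.

Lemma threat_second_move v g b w j y z : w != b -> e b y -> e y z ->
  y \notin [:: w; b; v] -> z \notin [:: w; b; v] -> ~~ e z w ->
  threat e (recolor (recolor (recolor (empty_col T 2) v g) b g) w j) b y z g.
Proof.
rewrite !inE !negb_or => wb eby eyz /and3P [yw yb yv] /and3P [zw zb zv] nezw.
split => //; rewrite ?third_moveE ?(negbTE yw) ?(negbTE yb) ?(negbTE yv) //.
  by rewrite eq_sym (negbTE wb) eqxx.
apply/legalP; split; first by rewrite third_moveE (negbTE zw) (negbTE zb) (negbTE zv).
move=> s ezs; rewrite third_moveE; case: (s =P w) => [sw|_]; first by rewrite -sw ezs in nezw.
by case: ifP => // _; apply: Some_neq_flip.
Qed.

Lemma bob_wins_P5 a1 a2 a3 a4 a5 : e a1 a2 -> e a2 a3 -> e a3 a4 -> e a4 a5 ->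
  a1 != a3 -> a2 != a4 -> a3 != a5 -> ~~ alice_wins e 2.
Proof.
move=> e12 e23 e34 e45 n13 n24 n35.
have far_from v : star_center v -> [/\ a1 != v, a2 != v, a3 != v, a4 != v & a5 != v].
  move=> Sv; split.
  - by apply: (star_center_neq Sv e12 e23); rewrite eq_sym.
  - by apply: (star_center_neq Sv e23 e34); rewrite eq_sym.
  - by apply: (star_center_neq Sv (_ : e a3 a2) (_ : e a2 a1)); rewrite // e_sym.
  - by apply: (star_center_neq Sv (_ : e a4 a3) (_ : e a3 a2)); rewrite // e_sym.
  - by apply: (star_center_neq Sv (_ : e a5 a4) (_ : e a4 a3)); rewrite // e_sym.
apply: (bob_wins_second_round (a := a1) (b := a3)) => // [v Sv|v g w j Sv wv wa3 _].
  have [a1v _ a3v _ _] := far_from v Sv; split => //.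
  apply/negP => eva3; move/eqP: n24; apply.
  by rewrite (Sv a3 a4 eva3 e34); apply: Sv eva3 _; rewrite e_sym.
have [a1v a2v a3v a4v a5v] := far_from v Sv.
have [near_a1|far_a1] := boolP [|| w == a1, w == a2 | e w a1].
- have [a4w a5w ne5w] := P5_start_far_from_end e_irr forest e12 e23 e34 e45 n13 n24 n35 near_a1.
  exists a3, a4, a5, g; apply: threat_second_move; rewrite ?inE ?negb_or //.
  + by rewrite a4w eq_sym (edge_neq e_irr e34) a4v.
  + by rewrite a5w (eq_sym a5) n35 a5v.
- move: far_a1; rewrite !negb_or => /and3P [wa1 wa2 new1].
  exists a3, a2, a1, g; apply: threat_second_move; rewrite ?inE ?negb_or //.
  + by rewrite e_sym.
  + by rewrite e_sym.
  + by rewrite eq_sym wa2 (edge_neq e_irr e23) a2v.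
  + by rewrite eq_sym wa1 n13 a1v.
  + by rewrite e_sym.
Qed.

Lemma bob_wins_spider l1 l2 p q r : e l1 p -> e l2 p -> e p q -> e q r ->
  l1 != l2 -> l1 != q -> p != r -> (forall s, e l2 s -> s = p) -> ~~ alice_wins e 2.
Proof.
move=> e1p e2p epq eqr n12 n1q npr l2_leaf.
have n1p := edge_neq e_irr e1p; have n2p := edge_neq e_irr e2p; have npq := edge_neq e_irr epq.
have n2q : l2 != q by apply: contraNneq npr => l2q; rewrite -(l2_leaf r) // l2q.
have nr1 : r != l1.
  by apply: contraTneq eqr => ->; apply/negP => eq1; apply: (no_triangle e_irr forest e1p epq eq1).
have far_from v : star_center v ->
    [/\ [/\ l1 != v, l2 != v, p != v & q != v], r != v & ~~ e v l1].
  move=> Sv; have pv : p != v by apply: (star_center_neq Sv epq eqr); rewrite eq_sym.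
  split; first split => //.
  - by apply: (star_center_neq Sv e1p epq); rewrite eq_sym.
  - by apply: (star_center_neq Sv e2p epq); rewrite eq_sym.
  - by apply: (star_center_neq Sv (_ : e q p) (_ : e p l1)); rewrite // e_sym.
  - by apply: (star_center_neq Sv (_ : e r q) (_ : e q p)); rewrite // e_sym.
  - by apply: contra_neqN pv => ev1; apply: Sv ev1 e1p.
apply: (bob_wins_second_round (a := p) (b := l1)) => // [|v Sv|v g w j Sv wv wl1 _].
- by rewrite eq_sym.
- by have [[? _ ? _] _ ?] := far_from v Sv.
have [[l1v l2v pv qv] rv nev1] := far_from v Sv.
have [wp|wp] := eqVneq w p.
  subst w; exists p, q, r, j; split => //; rewrite ?third_moveE ?eqxx //.
    by rewrite eq_sym (negbTE npq) eq_sym (negbTE n1q) (negbTE qv).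
  apply/legalP; split; first by rewrite third_moveE eq_sym (negbTE npr) (negbTE nr1) (negbTE rv).
  move=> s ers; rewrite third_moveE; case: (s =P p) => [_|_]; first exact: Some_neq_flip.
  case: ifP => // /orP [/eqP sl1|/eqP sv] _; subst s.
  - exact: (no_square e_irr forest e1p epq eqr ers).
  - by move/eqP: qv; apply; apply: (Sv r); rewrite e_sym.
have [wl2|wl2] := eqVneq w l2.
  subst w; exists l1, p, q, g; apply: threat_second_move; rewrite ?inE ?negb_or //.
  - by rewrite eq_sym n2p eq_sym n1p pv.
  - by rewrite eq_sym n2q eq_sym n1q qv.
  - by apply: contra_neqN npq => eq2; rewrite (l2_leaf q) // e_sym.
exists l1, p, l2, g; apply: threat_second_move; rewrite ?inE ?negb_or //.
- by rewrite e_sym.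
- by rewrite eq_sym wp eq_sym n1p pv.
- by rewrite eq_sym wl2 eq_sym n12 l2v.
- by apply: contra_neqN wp => e2w; rewrite (l2_leaf w).
Qed.

(* Bob always answers outside [S]; by parity Alice is the first to enter [S]. *)
Lemma bob_wins_parity (S : {set T}) x0 : x0 \in S ->
  (forall s t, s \in S -> e s t -> t \in S) ->
  (forall v, v \in S -> exists y z, [/\ e v y, e y z & z != v]) ->
  ~~ odd #|S| -> ~~ odd #|T| -> ~~ alice_wins e 2.
Proof.
move=> x0S closedS walk2 evenS evenT.
suff W n (c : pcol T 2) : (forall s, s \in S -> c s = None) -> ~~ odd #|uncolored c| ->
    alice_wins_from e n true c = false.
  by apply/negbT; apply: W => [s _|]; rewrite ?ffunE ?card_uncolored_empty.
elim/ltn_ind: n c => n IH c cS evenc.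
have nac : ~~ all_colored c by apply/all_coloredPn; exists x0; exact: cS.
case: n IH => [|n] IH; first by rewrite /= (negbTE nac) andbF.
apply: (alice_loses_all_moves nac) => v k L; have /legalP [cv _] := L; apply/negbT.
have [vS|vS] := boolP (v \in S).
  have [y [z [evy eyz zv]]] := walk2 v vS.
  have yS := closedS v y vS evy; have zS := closedS y z yS eyz.
  apply: (bob_wins_threat e_sym e_irr _ (threat_recolor k evy eyz zv (cS y yS) (cS z zS) _)).
  by move=> s ezs _; rewrite cS // (closedS z).
set c1 := recolor c v k.
have c1S s : s \in S -> c1 s = None.
  by move=> sS; rewrite recolorE; case: (s =P v) => [sv|_]; [rewrite -sv sS in vS | exact: cS].
have [S1|NS1] := boolP (stuck e c1); first exact: stuck_alice_loses.
have odd_c1 : odd #|uncolored c1| by move: evenc; rewrite (card_uncolored_recolor k cv) /= negbK.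
have [t c1t tS] := exists_uncolored_outside c1S evenS odd_c1.
have [k' L'] := legal_of_not_stuck NS1 c1t.
apply: (bob_wins_by_move L'); apply/negbT; apply: IH => //=.
- by rewrite ltnS leq_pred.
- move=> s sS; rewrite recolorE; case: (s =P t) => [st|_]; last exact: c1S.
  by rewrite -st sS in tS.
- by move: evenc; rewrite (card_uncolored_recolor k cv) (card_uncolored_recolor k' c1t) /= negbK.
Qed.

End BobStrategies.

Section Distances.

Variables (T : finType) (e : rel T).

Lemma dist_le_refl a : dist_le e a a 0.
Proof. by exists [::]. Qed.

Lemma dist_le_edge a b : e a b -> dist_le e a b 1.
Proof. by move=> eab; exists [:: b]; rewrite /= eab. Qed.

Lemma dist_le_cat a b c m n : dist_le e a b m -> dist_le e b c n -> dist_le e a c (m + n).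
Proof.
move=> [p [sp pp lp]] [q [sq pq lq]]; exists (p ++ q); split.
- by rewrite size_cat leq_add.
- by rewrite cat_path pp lp.
- by rewrite last_cat lp.
Qed.

Lemma dist_le_mono a b m n : dist_le e a b m -> m <= n -> dist_le e a b n.
Proof. by move=> [p [sp pp lp]] mn; exists p; split => //; apply: leq_trans mn. Qed.

Lemma P4_of_dist u w : dist_le e u w 3 -> ~ dist_le e u w 2 ->
  exists a b, [/\ e u a, e a b, e b w, u != b & a != w].
Proof.
move=> [p [sp pth lst]] far.
have short : size p <= 2 -> False by move=> sp2; apply: far; exists p.
case: p sp pth lst short => [|a [|b [|c [|? ?]]]] //= _; try by move=> _ _; case.
move=> /and4P [eua eab ebc _] cw _; subst w; exists a, b; split => //.
- by apply/eqP => ub; apply: far; exists [:: c]; rewrite /= ub ebc.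
- by apply/eqP => ac; apply: far; exists [:: c]; rewrite /= -ac eua.
Qed.

End Distances.

Section Components.

Variables (T : finType) (e : rel T).
Hypotheses (e_sym : symmetric e) (e_irr : irreflexive e) (forest : is_forest e).

Lemma P4_ends_far a b c d : e a b -> e b c -> e c d -> a != c -> b != d -> ~ dist_le e a d 2.
Proof.
move=> eab ebc ecd ac bd [[|m [|m' [|? ?]]] [//= _ pth lst]].
- by subst d; apply: (no_triangle e_irr forest eab ebc).
- by subst d; move: pth; rewrite andbT => eam; apply: (no_square e_irr forest eab ebc ecd); rewrite // e_sym.
subst m'; move: pth => /and3P [eam emd _].
have [da|da] := eqVneq d a; first by subst d; apply: (no_triangle e_irr forest eab ebc).
have [mc|mc] := eqVneq m c; first by subst m; apply: (no_triangle e_irr forest eab ebc); rewrite e_sym.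
apply: (no_pentagon e_irr forest eab ebc ecd (_ : e d m) (_ : e m a)); rewrite // 1?e_sym //.
by rewrite eq_sym.
Qed.

Lemma induces_path_of_P4 (C : {set T}) q1 q2 q3 q4 :
  e q1 q2 -> e q2 q3 -> e q3 q4 -> q1 != q3 -> q2 != q4 ->
  C =i [:: q1; q2; q3; q4] -> induces_path e C.
Proof.
move=> e12 e23 e34 n13 n24 CE; set s := [:: q1; q2; q3; q4].
have U : uniq s.
  apply: (@no_backtrack_uniq _ _ e_irr forest q1 [:: q2; q3; q4]); first by rewrite /= e12 e23 e34.
  by rewrite /= n13 n24.
have ne13 : e q1 q3 = false by apply/negP => e13; apply: (no_triangle e_irr forest e12 e23); rewrite e_sym.
have ne24 : e q2 q4 = false by apply/negP => e24; apply: (no_triangle e_irr forest e23 e34); rewrite e_sym.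
have ne14 : e q1 q4 = false.
  by apply/negP => e14; apply: (no_square e_irr forest e12 e23 e34); rewrite // e_sym.
have nth_edge i j : i < 4 -> j < 4 -> e (nth q1 s i) (nth q1 s j) = (i.+1 == j) || (j.+1 == i).
  by case: i j => [|[|[|[|i]]]] [|[|[|[|j]]]] //= _ _;
    rewrite ?e_irr ?e12 ?e23 ?e34 ?ne13 ?ne24 ?ne14 // e_sym ?e12 ?e23 ?e34 ?ne13 ?ne24 ?ne14.
exists s; split => // x y; rewrite !CE => xs ys.
by rewrite -{1}(nth_index q1 xs) -{1}(nth_index q1 ys) nth_edge ?index_mem.
Qed.

Lemma induces_path_deg2 (C : {set T}) y x1 x2 x3 : induces_path e C ->
  y \in C -> x1 \in C -> x2 \in C -> x3 \in C -> e y x1 -> e y x2 -> e y x3 ->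
  x1 != x2 -> x1 != x3 -> x2 != x3 -> False.
Proof.
move=> [s [_ Cs adj]] yC x1C x2C x3C ey1 ey2 ey3.
have index_neq a b : a \in C -> b \in C -> a != b -> index a s != index b s.
  move=> aC bC; apply: contraNneq => E.
  by rewrite -(nth_index a (_ : a \in s)) -?Cs // E nth_index -?Cs.
move=> /(index_neq _ _ x1C x2C) n12 /(index_neq _ _ x1C x3C) n13 /(index_neq _ _ x2C x3C) n23.
move: (adj y x1 yC x1C) (adj y x2 yC x2C) (adj y x3 yC x3C); rewrite ey1 ey2 ey3.
lia.
Qed.

Lemma exit_edge (A : pred T) x z : connect e x z -> x \in A -> z \notin A ->
  exists a b, [/\ a \in A, b \notin A & e a b].
Proof.
move/connectP => [p pth ->]; elim: p x pth => [|y p IH] x /= pth xA zA.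
  by rewrite xA in zA.
move/andP: pth => [exy pth].
have [yA|yA] := boolP (y \in A); first exact: (IH y).
by exists x, y.
Qed.

End Components.

Section TwoColorStructure.

Variables (T : finType) (e : rel T).
Hypotheses (e_sym : symmetric e) (e_irr : irreflexive e) (forest : is_forest e).
Hypothesis noP5 : P5_free e.

Section AliceWins.

Hypothesis win : alice_wins e 2.

Lemma P4_component q1 q2 q3 q4 : e q1 q2 -> e q2 q3 -> e q3 q4 -> q1 != q3 -> q2 != q4 ->
  component e q1 =i [:: q1; q2; q3; q4].
Proof.
move=> e12 e23 e34 n13 n24 z; rewrite inE; apply/idP/idP => [cz|]; last first.
  have c2 := connect1 e12; have c3 := connect_trans c2 (connect1 e23).
  by rewrite !inE => /or4P [] /eqP ->; rewrite ?connect0 ?c2 ?c3 ?(connect_trans c3 (connect1 e34)).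
apply/negPn/negP => zout; have [a [b [aP bP eab]]] := exit_edge cz (mem_head _ _) zout.
move: bP; rewrite !inE !negb_or => /and4P [b1 b2 b3 b4].
have leaf p q r : e b p -> e p q -> e q r -> b != q -> p != r -> forall s, e b s -> s = p.
  move=> ebp epq eqr bq pr s ebs; apply/eqP/negPn/negP => sp.
  by apply: (@noP5 s b p q r); sym_done.
move: aP; rewrite !inE => /or4P [] /eqP ?; subst a.
- by apply: (@noP5 b q1 q2 q3 q4); sym_done.
- move: win; apply/negP; apply: (@bob_wins_spider _ _ e_sym e_irr forest q1 b q2 q3 q4); try sym_done.
  by apply: (leaf q2 q3 q4); sym_done.
- move: win; apply/negP; apply: (@bob_wins_spider _ _ e_sym e_irr forest q4 b q3 q2 q1); try sym_done.
  by apply: (leaf q3 q2 q1); sym_done.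
- by apply: (@noP5 b q4 q3 q2 q1); sym_done.
Qed.

Lemma odd_card_of_path3 : has_path_of_length e 3 -> odd #|T|.
Proof.
move=> /walk_of_path3 [q1 [q2 [q3 [q4 [e12 e23 e34 n13 n24]]]]].
have CE := P4_component e12 e23 e34 n13 n24.
have U : uniq [:: q1; q2; q3; q4].
  apply: (@no_backtrack_uniq _ _ e_irr forest q1 [:: q2; q3; q4]); first by rewrite /= e12 e23 e34.
  by rewrite /= n13 n24.
apply/negPn/negP => evenT; move: win; apply/negP.
apply: (@bob_wins_parity _ _ e_sym e_irr (component e q1) q1) => //.
- by rewrite CE mem_head.
- by move=> s t; rewrite !inE => cs est; apply: connect_trans cs (connect1 est).
- move=> v; rewrite CE !inE => /or4P [] /eqP ->;
    [exists q2, q3 | exists q3, q4 | exists q2, q1 | exists q3, q2]; split; sym_done.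
- by rewrite (eq_card CE) (card_uniqP U).
Qed.

Lemma diameter3_induces_path C : is_component e C -> diameter_is e C 3 -> induces_path e C.
Proof.
move=> [v ->] [near [[u [w [uC wC far]]] _]].
have [a [b [eua eab ebw ub aw]]] := P4_of_dist (near u w uC wC) far.
apply: (induces_path_of_P4 e_sym e_irr forest eua eab ebw ub aw) => z.
rewrite -(P4_component eua eab ebw ub aw) !inE; move: uC; rewrite inE => cvu.
apply/idP/idP => [cvz|cuz]; last exact: connect_trans cvu cuz.
by apply: connect_trans cvz; rewrite (sym_connect_sym e_sym).
Qed.

End AliceWins.

Section DoubleStar.

Variables (y w x w' : T).
Hypotheses (eyw : e y w) (eyx : e y x) (xw : x != w) (eww' : e w w') (w'y : w' != y).

Lemma double_star_component t : t \in component e y -> [|| t == y, t == w, e y t | e w t].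
Proof.
pose near := [pred u | [|| u == y, u == w, e y u | e w u]].
have closed_near : closed e near.
  apply: (intro_closed (sym_connect_sym e_sym)) => u s eus; rewrite !inE.
  case/or4P => [/eqP <-|/eqP <-|eyu|ewu]; rewrite ?eus ?orbT //.
  - case: (s =P y) => // /eqP sy; case: (u =P w) => [<-|/eqP uw]; first by rewrite eus !orbT.
    by case: (@noP5 s u y w w'); sym_done.
  - case: (s =P w) => [_|/eqP sw]; first by rewrite orbT.
    case: (u =P y) => [<-|/eqP uy]; first by rewrite eus !orbT.
    by case: (@noP5 s u w y x); sym_done.
rewrite inE => cyt; have := closed_connect closed_near cyt.
by rewrite !inE eqxx /= => <-.
Qed.

Lemma double_star_diameter : diameter_is e (component e y) 3.
Proof.
have hub t : t \in component e y ->
    exists c, [/\ (c == y) || (c == w), dist_le e t c 1 & dist_le e c t 1].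
  move/double_star_component => /or4P [/eqP ->|/eqP ->|eyt|ewt].
  - by exists y; rewrite eqxx; split => //; apply: dist_le_mono (dist_le_refl e y) _.
  - by exists w; rewrite eqxx orbT; split => //; apply: dist_le_mono (dist_le_refl e w) _.
  - by exists y; rewrite eqxx; split => //; apply: dist_le_edge; rewrite // e_sym.
  - by exists w; rewrite eqxx orbT; split => //; apply: dist_le_edge; rewrite // e_sym.
split; [|split] => //.
  move=> u1 u2 /hub [c1 [c1yw d1 _]] /hub [c2 [c2yw _ d2]].
  suff d12 : dist_le e c1 c2 1 by apply: dist_le_cat (dist_le_cat d1 d12) d2.
  case/orP: c1yw => /eqP ->; case/orP: c2yw => /eqP ->.
  - exact: dist_le_mono (dist_le_refl e y) _.
  - exact: dist_le_edge.
  - by apply: dist_le_edge; rewrite e_sym.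
  - exact: dist_le_mono (dist_le_refl e w) _.
exists x, w'; split; rewrite ?inE.
- exact: connect1.
- exact: connect_trans (connect1 eyw) (connect1 eww').
- by apply: (P4_ends_far e_sym e_irr forest _ eyw eww'); rewrite 1?e_sym // eq_sym.
Qed.

End DoubleStar.

Lemma double_star_free_of_path_components :
  (forall C, is_component e C -> diameter_is e C 3 -> induces_path e C) -> double_star_free e.
Proof.
move=> path_comp y w x1 x2 w' eyw eyx1 eyx2 eww' x12 x1w x2w w'y.
have paths := path_comp _ (ex_intro _ y erefl) (double_star_diameter eyw eyx1 x1w eww' w'y).
have in_comp t : e y t -> t \in component e y by move=> eyt; rewrite inE connect1.
apply: (induces_path_deg2 paths _ (in_comp x1 eyx1) (in_comp x2 eyx2) (in_comp w eyw) eyx1 eyx2 eyw) => //.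
by rewrite inE connect0.
Qed.

End TwoColorStructure.

Section ChiG2.

Variables (T : finType) (e : rel T).
Hypotheses (e_sym : symmetric e) (e_irr : irreflexive e) (forest : is_forest e).

Lemma path_condition_of_chi_g2 :
  alice_wins e 2 -> ~~ alice_wins e 1 ->
  (exists k, [/\ 1 <= k, k <= 2 & longest_path_length_is e k]) \/
  [/\ longest_path_length_is e 3, odd #|T| &
      forall C : {set T}, is_component e C -> diameter_is e C 3 -> induces_path e C].
Proof.
move=> win lose1.
have noP5 : P5_free e.
  by move=> a b c d f eab ebc ecd edf ac bd cf; move: win; apply/negP; exact: bob_wins_P5 eab ebc ecd edf ac bd cf.
have P1 : has_path_of_length e 1.
  apply/(has_path1P e_irr); apply: NNPP => no_edge; move/negP: lose1; apply.
  by apply: alice_wins_edgeless => u v; apply/negP => euv; apply: no_edge; exists u, v.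
case: (classic (has_path_of_length e 3)) => [P3|noP3].
  right; split; first exact: longest_path_length_of (no_path4_of_P5_free noP5).
  - exact: odd_card_of_path3 P3.
  - exact: diameter3_induces_path.
left; case: (classic (has_path_of_length e 2)) => [P2|noP2].
- by exists 2; split => //; apply: longest_path_length_of.
- by exists 1; split => //; apply: longest_path_length_of.
Qed.

Lemma alice_wins2_of_path_condition :
  (exists k, [/\ 1 <= k, k <= 2 & longest_path_length_is e k]) \/
  [/\ longest_path_length_is e 3, odd #|T| &
      forall C : {set T}, is_component e C -> diameter_is e C 3 -> induces_path e C] ->
  alice_wins e 2.
Proof.
case=> [[k [_ k2 [_ longest]]]|[[_ longest] odd_T path_comp]].
  have noP3 : ~ has_path_of_length e 3 by move=> /longest; rewrite leqNgt (leq_ltn_trans k2).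
  have noP4 := P4_free_of_no_path3 e_irr forest noP3.
  have noP5 : P5_free e.
    by apply: P5_free_of_no_path4 => // P4; apply: noP3; apply: has_path_le P4 _.
  by apply: alice_wins_two_colors (double_star_free_of_P4_free e_sym noP4) _ => //; left.
have noP5 : P5_free e by apply: P5_free_of_no_path4 => // /longest.
apply: alice_wins_two_colors (double_star_free_of_path_components e_sym e_irr forest noP5 path_comp) _;
  by [|right].
Qed.

End ChiG2.

Theorem theorem4p3 (T : finType) (e : rel T)
    (e_sym : symmetric e) (e_irr : irreflexive e) (F_forest : is_forest e) :
  game_chromatic_number_is e 2 <->
  ((exists k, [/\ 1 <= k, k <= 2 & longest_path_length_is e k]) \/
   [/\ longest_path_length_is e 3, odd #|T| &
       forall C : {set T}, is_component e C -> diameter_is e C 3 ->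
         induces_path e C]).
Proof.
split=> [[win lose]|H].
  exact: path_condition_of_chi_g2 (lose 1 isT).
split; first exact: alice_wins2_of_path_condition.
have [u [v euv]] : exists u v, e u v.
  apply/(has_path1P e_irr); case: H => [[k [k1 _ [Pk _]]]|[[P3 _] _ _]].
  - exact: has_path_le Pk k1.
  - exact: has_path_le P3 _.
by move=> s s2; apply: alice_loses_one_color euv.
Qed.
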